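(* Assume (A1), (A2), (A3) (see context). Then $\mathrm x\in\mathbb R^n$ and $\mathrm y\in\mathbb R^{p+q}$ are optimal solutions of (P) and (D), respectively, if and only if there exist $\mathrm Z\in\mathbb R^{r(p+q)}$ and $\mathrm Y=\mathbf 1_m\otimes\mathrm y$ such that $0\in\Phi(\mathrm x,\mathrm Y,\mathrm Z)$.
   Context: Let $m\ge2$, $n_1,\dots,n_m\ge1$, $p,q\ge0$ integers, $n=\sum_in_i$, $\mathcal V=\{1,\dots,m\}$. For $i\in\mathcal V$ let $f_i:\mathbb R^{n_i}\to\mathbb R$, $A_i\in\mathbb R^{p\times n_i}$, $b_i\in\mathbb R^p$, $g_i:\mathbb R^{n_i}\to\mathbb R^q$, $\Omega_i\subseteq\mathbb R^{n_i}$, $G_i(\mathrm x_i)=\mathrm{col}(A_i\mathrm x_i-b_i,g_i(\mathrm x_i))\in\mathbb R^{p+q}$, $\mathcal K=\{0_p\}\times\mathbb R^q_-$, $\mathcal K^\circ=\mathbb R^p\times\mathbb R^q_+$. Problem (P): minimize $\sum_if_i(\mathrm x_i)$ over $\mathrm x=\mathrm{col}(\mathrm x_1,\dots,\mathrm x_m)$ s.t. $\sum_iG_i(\mathrm x_i)\in\mathcal K$, $\mathrm x_i\in\Omega_i$. With $\delta_S$ the indicator of $S$, $\ell_i(\mathrm x_i,\mathrm y)=f_i(\mathrm x_i)+\mathrm y^\top G_i(\mathrm x_i)+\delta_{\Omega_i}(\mathrm x_i)-\delta_{\mathcal K^\circ}(\mathrm y)$; dual (D): maximize $\sum_i\inf_{\mathrm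 x_i}\ell_i(\mathrm x_i,\mathrm y)$ over $\mathrm y\in\mathbb R^{p+q}$. Assumptions. (A1) $\mathcal G=(\mathcal V,\mathcal E)$ connected undirected; $L\in\mathbb R^{m\times m}$ symmetric, compatible with $\mathcal G$ ($L_{ij}=0$ for $i\ne j$, $(i,j)\notin\mathcal E$, and $\mathrm{null}(L)=\mathrm{span}\{\mathbf 1_m\}$), $L=U^\top U$ with $U\in\mathbb R^{r\times m}$ full row rank, $U\mathbf 1_m=0$. (A2) $f_i$ and components of $g_i$ proper closed convex, $\Omega_i$ nonempty closed convex, (P) has an optimal solution. (A3) there is $\bar{\mathrm x}$ with $\bar{\mathrm x}_i\in\mathrm{int}\,\Omega_i$, $\sum_i(A_i\bar{\mathrm x}_i-b_i)=0$, $\sum_ig_i(\bar{\mathrm x}_i)<0$. Operator. $\mathbf U=U\otimes I_{p+q}$; for $\mathrm Y=\mathrm{col}(\mathrm y_1,\dots,\mathrm y_m)$, $\mathrm y_i\in\mathbb R^{p+q}$, $\mathcal L(\mathrm x,\mathrm Y)=\sum_i\ell_i(\mathrm x_i,\mathrm y_i)$; $\partial_{\mathrm x}\mathcal L$ is the convex subdifferential in $\mathrm x$, $\partial_{\mathrm Y}\mathcal L:=-\partial_{\mathrm Y}[-\mathcal L]$; $\Phi(\mathrm x,\mathrm Y,\mathrm Z)=\partial_{\mathrm x}\mathcal L(\mathrm x,\mathrm Y)\times(-\partial_{\mathrm Y}\mathcal L(\mathrm x,\mathrm Y)+\mathbf U^\top\mathrm Z)\times\{-\mathbf U\mathrm Y\}$.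 *)

From HB Require Import structures.
From mathcomp Require Import all_boot all_order all_algebra.
From mathcomp Require Import all_classical all_reals all_analysis.
Import numFieldNormedType.Exports.
Set Implicit Arguments. Unset Strict Implicit. Unset Printing Implicit Defensive.
Import Order.TTheory GRing.Theory Num.Theory.
Local Open Scope ring_scope.
Local Open Scope classical_set_scope.

Section Defs.
Variable R : realType.

Definition vdot (k : nat) (u v : 'cV[R]_k) : R := (u^T *m v) 0 0.

Definition cvx_fun (k : nat) (h : 'cV[R]_k -> R) :=
  forall (x y : 'cV[R]_k) (t : R), 0 <= t <= 1 ->
    h (t *: x + (1 - t) *: y) <= t * h x + (1 - t) * h y.
Definition cvx_set (k : nat) (S : set 'cV[R]_k) :=
  forall (x y : 'cV[R]_k) (t : R), S x -> S y -> 0 <= t <= 1 ->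
    S (t *: x + (1 - t) *: y).

Definition indic (T : Type) (S : set T) (x : T) : \bar R :=
  if x \in S then 0%E else +oo%E.

Definition Kcone (p q : nat) : set 'cV[R]_(p + q) :=
  [set v | usubmx v = 0 /\ forall j, dsubmx v j 0 <= 0].
Definition Kpolar (p q : nat) : set 'cV[R]_(p + q) :=
  [set v | forall j, 0 <= dsubmx v j 0].

Definition Gfun (p q k : nat) (A : 'M[R]_(p, k)) (b : 'cV[R]_p)
  (g : 'cV[R]_k -> 'cV[R]_q) (x : 'cV[R]_k) : 'cV[R]_(p + q) :=
  col_mx (A *m x - b) (g x).

Definition ell (p q k : nat) (f : 'cV[R]_k -> R) (A : 'M[R]_(p, k))
  (b : 'cV[R]_p) (g : 'cV[R]_k -> 'cV[R]_q) (Om : set 'cV[R]_k)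
  (x : 'cV[R]_k) (y : 'cV[R]_(p + q)) : \bar R :=
  ((f x + vdot y (Gfun A b g x))%:E + indic Om x - indic (@Kpolar p q) y)%E.

Definition famdot (k : nat) (d : 'I_k -> nat)
  (u v : forall i : 'I_k, 'cV[R]_(d i)) : R :=
  \sum_(i < k) vdot (u i) (v i).

(* convex subdifferential of an extended-real-valued function on
   prod_i R^{d_i}; empty where the function is not finite. *)
Definition subdiff (k : nat) (d : 'I_k -> nat)
  (phi : (forall i : 'I_k, 'cV[R]_(d i)) -> \bar R)
  (z : forall i : 'I_k, 'cV[R]_(d i)) : set (forall i : 'I_k, 'cV[R]_(d i)) :=
  [set v | phi z \is a fin_num /\
     forall z' : forall i : 'I_k, 'cV[R]_(d i),
       (phi z + (famdot v (fun i => z' i - z i))%:E <= phi z')%E].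

(* Bold U = U (x) I_{p+q} acting on stacked vectors, and its transpose *)
Definition bU (r m s : nat) (U : 'M[R]_(r, m)) (Y : 'I_m -> 'cV[R]_s)
  : 'I_r -> 'cV[R]_s := fun k => \sum_(j < m) U k j *: Y j.
Definition bUt (r m s : nat) (U : 'M[R]_(r, m)) (Z : 'I_r -> 'cV[R]_s)
  : 'I_m -> 'cV[R]_s := fun j => \sum_(k < r) U k j *: Z k.

Unset Implicit Arguments.
Section Problem.
Variables (m : nat) (n : 'I_m -> nat) (p q : nat).
Variables (f : forall i : 'I_m, 'cV[R]_(n i) -> R)
          (A : forall i : 'I_m, 'M[R]_(p, n i))
          (b : 'I_m -> 'cV[R]_p)
          (g : forall i : 'I_m, 'cV[R]_(n i) -> 'cV[R]_q)
          (Om : forall i : 'I_m, set 'cV[R]_(n i)).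

Definition primal_obj (x : forall i : 'I_m, 'cV[R]_(n i)) : R :=
  \sum_(i < m) f i (x i).

Definition primal_feasible (x : forall i : 'I_m, 'cV[R]_(n i)) : Prop :=
  @Kcone p q (\sum_(i < m) Gfun (A i) (b i) (g i) (x i)) /\
  forall i, Om i (x i).

Definition primal_opt (x : forall i : 'I_m, 'cV[R]_(n i)) : Prop :=
  primal_feasible x /\
  forall x', primal_feasible x' -> primal_obj x <= primal_obj x'.

Definition dual_fun (y : 'cV[R]_(p + q)) : \bar R :=
  (\sum_(i < m) ereal_inf (range (fun xi => ell (f i) (A i) (b i) (g i) (Om i) xi y)))%E.

Definition dual_opt (y : 'cV[R]_(p + q)) : Prop :=
  forall y', (dual_fun y' <= dual_fun y)%E.

Definition Lag (x : forall i : 'I_m, 'cV[R]_(n i)) (Y : 'I_m -> 'cV[R]_(p + q))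
  : \bar R :=
  (\sum_(i < m) ell (f i) (A i) (b i) (g i) (Om i) (x i) (Y i))%E.

Definition partial_x (x : forall i : 'I_m, 'cV[R]_(n i))
  (Y : 'I_m -> 'cV[R]_(p + q)) : set (forall i : 'I_m, 'cV[R]_(n i)) :=
  subdiff (fun x' => Lag x' Y) x.

Definition partial_Y (x : forall i : 'I_m, 'cV[R]_(n i))
  (Y : 'I_m -> 'cV[R]_(p + q)) : set ('I_m -> 'cV[R]_(p + q)) :=
  [set (fun j => - w j) | w in
     @subdiff m (fun _ => (p + q)%N) (fun Y' => (- Lag x Y')%E) Y].

Definition Phi (r : nat) (U : 'M[R]_(r, m))
  (x : forall i : 'I_m, 'cV[R]_(n i)) (Y : 'I_m -> 'cV[R]_(p + q))
  (Z : 'I_r -> 'cV[R]_(p + q)) :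
  set (((forall i : 'I_m, 'cV[R]_(n i)) * ('I_m -> 'cV[R]_(p + q)))
       * ('I_r -> 'cV[R]_(p + q))) :=
  [set t | partial_x x Y t.1.1 /\
     (exists2 w, partial_Y x Y w & t.1.2 = fun j => - w j + bUt U Z j) /\
     t.2 = fun k => - bU U Y k].

End Problem.
End Defs.

Arguments primal_obj {R m n} f x.
Arguments primal_feasible {R m n p q} A b g Om x.
Arguments primal_opt {R m n p q} f A b g Om x.
Arguments dual_fun {R m n p q} f A b g Om y.
Arguments dual_opt {R m n p q} f A b g Om y.
Arguments Lag {R m n p q} f A b g Om x Y.
Arguments partial_x {R m n p q} f A b g Om x Y _.
Arguments partial_Y {R m n p q} f A b g Om x Y _.
Arguments Phi {R m n p q} f A b g Om {r} U x Y Z _.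

From Pilot Require Import Defs.
From HB Require Import structures.
From mathcomp Require Import all_boot all_order all_algebra.
From mathcomp Require Import all_classical all_reals all_analysis.
From mathcomp Require Import ring lra.
Import numFieldNormedType.Exports.
Set Implicit Arguments. Unset Strict Implicit. Unset Printing Implicit Defensive.
Import Order.TTheory GRing.Theory Num.Theory.
Local Open Scope ring_scope.
Local Open Scope classical_set_scope.

(* Both directions go through the KKT conditions: x minimizes the Lagrangian
   for the multiplier y in K°, G(x) lies in K, and <y, G(x)> = 0.

   With Y = 1 (x) y, the condition 0 \in - d_Y L + U^T Z says that y maximizes
   y' |-> <y', G(x)> over K° (the rows of U^T Z sum to zero since U 1 = 0);
   this is feasibility plus complementary slackness, and 0 \in d_x L is the
   minimization. Conversely, the rows G_i(x_i) - G(x)/m sum to zero, hence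
   lie in the range of U^T, because the kernel of U is spanned by 1.

   KKT points are optimal pairs by weak duality. For the other direction,
   Slater's condition gives a Lagrange multiplier y0 for the optimal x: separate
   0 from the convex set of (objective excess + t, G(x) + (0, s)), t > 0,
   s >= 0; a separator with vanishing objective component is excluded by the
   Slater point. Then dual optimality of y forces y itself to be a
   multiplier. The separation theorem is proved by induction on the
   dimension, for cones not containing 0. *)

Section InnerProduct.
Variable R : realType.
Implicit Types N : nat.

Lemma vdotE N (u v : 'cV[R]_N) : vdot u v = \sum_i u i 0 * v i 0.
Proof. by rewrite /vdot !mxE; apply: eq_bigr => i _; rewrite !mxE. Qed.

Lemma vdotC N (u v : 'cV[R]_N) : vdot u v = vdot v u.
Proof. by rewrite !vdotE; apply: eq_bigr => i _; rewrite mulrC. Qed.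

Lemma vdotDr N (u v w : 'cV[R]_N) : vdot u (v + w) = vdot u v + vdot u w.
Proof. by rewrite /vdot mulmxDr mxE. Qed.

Lemma vdotZr N a (u v : 'cV[R]_N) : vdot u (a *: v) = a * vdot u v.
Proof. by rewrite /vdot -scalemxAr mxE. Qed.

Lemma vdotNr N (u v : 'cV[R]_N) : vdot u (- v) = - vdot u v.
Proof. by rewrite /vdot mulmxN mxE. Qed.

Lemma vdotBr N (u v w : 'cV[R]_N) : vdot u (v - w) = vdot u v - vdot u w.
Proof. by rewrite vdotDr vdotNr. Qed.

Lemma vdot0r N (u : 'cV[R]_N) : vdot u 0 = 0.
Proof. by rewrite /vdot mulmx0 mxE. Qed.

Lemma vdot_sumr N k (u : 'cV[R]_N) (F : 'I_k -> 'cV[R]_N) :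
  vdot u (\sum_(j < k) F j) = \sum_(j < k) vdot u (F j).
Proof. by rewrite /vdot mulmx_sumr summxE. Qed.

Lemma vdotDl N (u v w : 'cV[R]_N) : vdot (v + w) u = vdot v u + vdot w u.
Proof. by rewrite ![vdot _ u]vdotC vdotDr. Qed.

Lemma vdotZl N a (u v : 'cV[R]_N) : vdot (a *: v) u = a * vdot v u.
Proof. by rewrite ![vdot _ u]vdotC vdotZr. Qed.

Lemma vdotNl N (u v : 'cV[R]_N) : vdot (- v) u = - vdot v u.
Proof. by rewrite ![vdot _ u]vdotC vdotNr. Qed.

Lemma vdot0l N (u : 'cV[R]_N) : vdot 0 u = 0.
Proof. by rewrite vdotC vdot0r. Qed.

Lemma vdot_suml N k (u : 'cV[R]_N) (F : 'I_k -> 'cV[R]_N) :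
  vdot (\sum_(j < k) F j) u = \sum_(j < k) vdot (F j) u.
Proof. by rewrite vdotC vdot_sumr; apply: eq_bigr => j _; rewrite vdotC. Qed.

Lemma vdot_col_mx N1 N2 (a : 'cV[R]_N1) (b : 'cV[R]_N2) (v : 'cV[R]_(N1 + N2)) :
  vdot (col_mx a b) v = vdot a (usubmx v) + vdot b (dsubmx v).
Proof. by rewrite /vdot -{1}(vsubmxK v) tr_col_mx mul_row_col mxE. Qed.

Lemma vdot_split N1 N2 (u v : 'cV[R]_(N1 + N2)) :
  vdot u v = vdot (usubmx u) (usubmx v) + vdot (dsubmx u) (dsubmx v).
Proof. by rewrite -{1}(vsubmxK u) vdot_col_mx. Qed.

Lemma vdot_delta N (u : 'cV[R]_N) j : vdot u (delta_mx j 0) = u j 0.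
Proof.
rewrite vdotE (bigD1 j) //= big1 => [|i ij]; first by rewrite !mxE !eqxx mulr1 addr0.
by rewrite !mxE (negbTE ij) mulr0.
Qed.

Lemma famdot0l k (d : 'I_k -> nat) (v : forall i, 'cV[R]_(d i)) :
  famdot (fun i => 0) v = 0.
Proof. by rewrite /famdot big1 // => i _; rewrite vdot0l. Qed.

Lemma famdot_const k N (w : 'I_k -> 'cV[R]_N) (e : 'cV[R]_N) :
  @famdot R k (fun _ => N) w (fun _ => e) = vdot (\sum_j w j) e.
Proof. by rewrite /famdot vdot_suml. Qed.

End InnerProduct.

Section ConeSeparation.
Variable R : realType.
Implicit Types N : nat.

Definition cone {N} (K : set 'cV[R]_N) :=
  (forall u v, K u -> K v -> K (u + v)) /\
  (forall t u, 0 < t -> K u -> K (t *: u)).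

Definition properly_separated0 {N} (K : set 'cV[R]_N) :=
  exists l, (forall u, K u -> 0 <= vdot l u) /\ exists2 u, K u & 0 < vdot l u.

Lemma coneI N (K H : set 'cV[R]_N) : cone K -> cone H -> cone (K `&` H).
Proof.
move=> [KD KZ] [HD HZ]; split=> [u v [Ku Hu] [Kv Hv]|t u t0 [Ku Hu]].
  by split; [exact: KD | exact: HD].
by split; [exact: KZ | exact: HZ].
Qed.

Lemma cone_tail N (K : set 'cV[R]_(1 + N)) : cone K -> cone (dsubmx @` K).
Proof.
move=> [KD KZ]; split=> [_ _ [u Ku <-] [v Kv <-]|t _ t0 [u Ku <-]].
  by exists (u + v); [exact: KD | exact: linearD].
by exists (t *: u); [exact: KZ | exact: linearZ].
Qed.

Lemma properly_separated0_tail N (K : set 'cV[R]_(1 + N)) :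
  properly_separated0 (dsubmx @` K) -> properly_separated0 K.
Proof.
move=> [l [l_ge0 [_ [u Ku <-] lu]]]; exists (col_mx 0 l); split.
  by move=> v Kv; rewrite vdot_col_mx vdot0l add0r; apply: l_ge0; exists v.
by exists u => //; rewrite vdot_col_mx vdot0l add0r.
Qed.

Definition vhead {N} (u : 'cV[R]_(1 + N)) : R := usubmx u 0 0.

Lemma vheadD N (u v : 'cV[R]_(1 + N)) : vhead (u + v) = vhead u + vhead v.
Proof. by rewrite /vhead linearD mxE. Qed.

Lemma vheadZ N a (u : 'cV[R]_(1 + N)) : vhead (a *: u) = a * vhead u.
Proof. by rewrite /vhead linearZ mxE. Qed.

Lemma vheadK N (u : 'cV[R]_(1 + N)) : col_mx (vhead u)%:M (dsubmx u) = u.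
Proof. by rewrite /vhead -mx11_scalar vsubmxK. Qed.

Lemma vhead_eq0 N (u : 'cV[R]_(1 + N)) : vhead u = 0 -> dsubmx u = 0 -> u = 0.
Proof. by move=> u0 tu0; rewrite -(vheadK u) u0 tu0 raddf0 col_mx0. Qed.

Lemma vdot_head N a (b : 'cV[R]_N) (v : 'cV[R]_(1 + N)) :
  vdot (col_mx a%:M b) v = a * vhead v + vdot b (dsubmx v).
Proof. by rewrite vdot_col_mx vdotE big_ord1 mxE eqxx mulr1n. Qed.

Lemma cone_head_le0 N : cone [set u : 'cV[R]_(1 + N) | vhead u <= 0].
Proof.
split=> [u v /= hu hv|t u t0 /= hu]; first by rewrite vheadD; lra.
by rewrite vheadZ pmulr_rle0.
Qed.

Lemma cone_axis_head_pos N (K : set 'cV[R]_(1 + N)) u0 u :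
  cone K -> ~ K 0 -> K u0 -> dsubmx u0 = 0 -> 0 < vhead u0 ->
  K u -> dsubmx u = 0 -> 0 < vhead u.
Proof.
move=> [KD KZ] K0 Ku0 tu0 hu0 Ku tu.
case: (ltgtP (vhead u) 0) => // [hu|/vhead_eq0/(_ tu) u_eq0]; last by case: K0; rewrite -u_eq0.
case: K0; have -> : 0 = vhead u0 *: u + (- vhead u) *: u0.
  apply/esym/vhead_eq0; first by rewrite vheadD !vheadZ mulNr mulrC addrN.
  by rewrite linearD !linearZ /= tu0 tu !scaler0 addr0.
by apply: KD; apply: KZ; rewrite ?oppr_gt0.
Qed.

Definition flip_head {N} (v : 'cV[R]_(1 + N)) : 'cV[R]_(1 + N) :=
  col_mx (- usubmx v) (dsubmx v).

Lemma flip_headK N : involutive (@flip_head N).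
Proof. by move=> v; rewrite /flip_head col_mxKu col_mxKd opprK vsubmxK. Qed.

Lemma cone_flip_head N (K : set 'cV[R]_(1 + N)) : cone K -> cone (flip_head @^-1` K).
Proof.
move=> [KD KZ]; split=> [u v Ku Kv|t u t0 Ku] /=.
  by rewrite /flip_head !raddfD /= -add_col_mx; exact: KD.
by rewrite /flip_head !linearZ /= -scale_col_mx; exact: KZ.
Qed.

Lemma vdot_flip_head N (u v : 'cV[R]_(1 + N)) :
  vdot (flip_head u) v = vdot u (flip_head v).
Proof.
rewrite /flip_head vdot_col_mx [RHS]vdotC vdot_col_mx !vdotNl.
by rewrite [vdot (usubmx v) _]vdotC [vdot (dsubmx v) _]vdotC.
Qed.

Lemma properly_separated0_flip_head N (K : set 'cV[R]_(1 + N)) :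
  properly_separated0 (flip_head @^-1` K) -> properly_separated0 K.
Proof.
move=> [l [l_ge0 [w Kw lw]]]; exists (flip_head l); split.
  by move=> v Kv; rewrite vdot_flip_head; apply: l_ge0; rewrite /= flip_headK.
by exists (flip_head w) => //; rewrite vdot_flip_head flip_headK.
Qed.

Lemma exists_between (S T : set R) : S !=set0 -> T !=set0 ->
  (forall s t, S s -> T t -> s <= t) ->
  exists a, (forall s, S s -> s <= a) /\ (forall t, T t -> a <= t).
Proof.
move=> S0 [t0 Tt0] ST; have supS : has_sup S by split=> //; exists t0 => s Ss; exact: ST.
exists (sup S); split; first exact/ubP/sup_upper_bound.
by move=> t Tt; apply: ge_sup => // s Ss; exact: ST.
Qed.

(* The multiplier of the head coordinate is squeezed between the ratios
   coming from vectors with positive and with negative head. *)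
Lemma cone_sep_head_pos N
    (IH : forall K : set 'cV[R]_N, cone K -> ~ K 0 -> K !=set0 -> properly_separated0 K)
    (K : set 'cV[R]_(1 + N)) u0 :
  cone K -> ~ K 0 -> K u0 -> dsubmx u0 = 0 -> 0 < vhead u0 -> properly_separated0 K.
Proof.
move=> cK K0 Ku0 tu0 hu0; have [KD KZ] := cK.
have [K_ge0|] := pselect (forall u, K u -> 0 <= vhead u).
  exists (col_mx 1%:M 0); split; last exists u0 => //;
    by move=> *; rewrite vdot_head vdot0l addr0 mul1r; auto.
move=> /existsNP [u2 /not_implyP [Ku2 /negP]]; rewrite -ltNge => hu2.
pose D := dsubmx @` (K `&` [set u | vhead u <= 0]).
have D0 : ~ D 0.
  move=> [u [Ku /= hu] tu]; have := cone_axis_head_pos cK K0 Ku0 tu0 hu0 Ku tu; lra.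
have [psi [psi_ge0 [_ [u1 [Ku1 hu1] <-] psi1]]] :=
  IH D (cone_tail (coneI cK (cone_head_le0 N))) D0
    (ex_intro _ _ (ex_intro2 _ _ u2 (conj Ku2 (ltW hu2)) erefl)).
pose c (u : 'cV[R]_(1 + N)) := vdot psi (dsubmx u).
have c_comb u w : K u -> K w -> 0 < vhead u -> vhead w < 0 -> - c u / vhead u <= c w / (- vhead w).
  move=> Ku Kw hu hw; rewrite ler_pdivlMr ?oppr_gt0 // mulrAC ler_pdivrMr //.
  have : 0 <= c ((- vhead w) *: u + vhead u *: w).
    apply: psi_ge0; exists ((- vhead w) *: u + vhead u *: w) => //; split.
      by apply: KD; apply: KZ; rewrite ?oppr_gt0.
    by rewrite /= vheadD !vheadZ mulNr mulrC addNr.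
  rewrite /c linearD !linearZ /= vdotDr !vdotZr; nra.
pose S := [set - c u / vhead u | u in K `&` [set u | 0 < vhead u]].
pose T := [set c w / (- vhead w) | w in K `&` [set w | vhead w < 0]].
have [al [alS alT]] : exists al, (forall s, S s -> s <= al) /\ (forall t, T t -> al <= t).
  apply: exists_between; first by exists (- c u0 / vhead u0), u0.
    by exists (c u2 / (- vhead u2)), u2.
  by move=> _ _ [u [Ku hu] <-] [w [Kw hw] <-]; exact: c_comb.
have al0 : 0 <= al by apply: alS; exists u0 => //; rewrite /c tu0 vdot0r oppr0 mul0r.
exists (col_mx al%:M psi); split=> [u Ku|]; first rewrite vdot_head -/(c _).
  case: (ltgtP (vhead u) 0) => hu.
  - have : al <= c u / (- vhead u) by apply: alT; exists u.
    by rewrite ler_pdivlMr ?oppr_gt0 // mulrN; lra.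
  - have : - c u / vhead u <= al by apply: alS; exists u.
    by rewrite ler_pdivrMr //; lra.
  - by rewrite hu mulr0 add0r; apply: psi_ge0; exists u => //; split=> //=; rewrite hu.
have [->|al_neq0] := eqVneq al 0; first by exists u1 => //; rewrite vdot_head mul0r add0r.
by exists u0 => //; rewrite vdot_head tu0 vdot0r addr0 mulr_gt0 // lt_neqAle eq_sym al_neq0.
Qed.

Lemma cone_sep N (K : set 'cV[R]_N) :
  cone K -> ~ K 0 -> K !=set0 -> properly_separated0 K.
Proof.
elim: N K => [|N IH] K cK K0 [u Ku]; first by case: K0; rewrite -(flatmx0 u).
move: K cK K0 u Ku.
change (forall K : set 'cV[R]_(1 + N), cone K -> ~ K 0 -> forall u, K u ->
  properly_separated0 K).
move=> K cK K0 u Ku.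
have [[u0 [Ku0 tu0]]|no_axis] := pselect (exists u0, K u0 /\ dsubmx u0 = 0).
  case: (ltgtP (vhead u0) 0) => hu0; last by case: K0; rewrite -(vhead_eq0 hu0 tu0).
    apply: properly_separated0_flip_head.
    apply: (cone_sep_head_pos IH (u0 := flip_head u0)); rewrite /= ?flip_headK //.
    - exact: cone_flip_head.
    - by rewrite /flip_head !raddf0 col_mx0.
    - by rewrite /flip_head col_mxKd.
    - by rewrite /vhead /flip_head col_mxKu mxE oppr_gt0.
  exact: (cone_sep_head_pos IH cK K0 Ku0 tu0 hu0).
apply: properly_separated0_tail; apply: IH; first exact: cone_tail.
  by move=> [v Kv tv]; apply: no_axis; exists v.
by exists (dsubmx u), u.
Qed.

Definition cone_hull {N} (C : set 'cV[R]_N) := [set t *: c | t in [set t | 0 < t] & c in C].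

Lemma cone_hull_cone N (C : set 'cV[R]_N) : cvx_set C -> cone (cone_hull C).
Proof.
move=> cC; split=> [_ _ [t1 t10 [c1 Cc1 <-]] [t2 t20 [c2 Cc2 <-]]|t _ t0 [t1 t10 [c1 Cc1 <-]]].
  have s0 : 0 < t1 + t2 by rewrite addr_gt0.
  exists (t1 + t2) => //; exists ((t1 / (t1 + t2)) *: c1 + (1 - t1 / (t1 + t2)) *: c2).
    apply: cC => //; apply/andP; split; first by rewrite divr_ge0 ?ltW.
    by rewrite ler_pdivrMr // mul1r lerDl ltW.
  have -> : 1 - t1 / (t1 + t2) = t2 / (t1 + t2) by field; rewrite gt_eqF.
  by rewrite scalerDr !scalerA !mulrA !(mulrC (t1 + t2)) -!mulrA mulfV ?gt_eqF // !mulr1.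
by exists (t * t1); [exact: mulr_gt0 | exists c1 => //; rewrite scalerA].
Qed.

Lemma convex_sep N (C : set 'cV[R]_N) :
  cvx_set C -> ~ C 0 -> C !=set0 -> properly_separated0 C.
Proof.
move=> cC C0 [c0 Cc0].
have hull0 : ~ cone_hull C 0.
  move=> [t t0 [c Cc /eqP]]; rewrite scaler_eq0 gt_eqF //= => /eqP c_eq0.
  by apply: C0; rewrite -c_eq0.
have [l [l_ge0 [_ [t t0 [c Cc <-]]] lc]] := cone_sep (cone_hull_cone cC) hull0
  (ex_intro _ c0 (ex_intro2 _ _ 1 ltr01 (ex_intro2 _ _ c0 Cc0 (scale1r c0)))).
exists l; split=> [v Cv|]; first by apply: (l_ge0 v); exists 1 => //=; exists v; rewrite ?scale1r.
by exists c => //; move: lc; rewrite vdotZr pmulr_rgt0.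
Qed.

End ConeSeparation.

Lemma big_dfwith (I : finType) (T : I -> Type) (V : zmodType)
    (h : forall i, T i -> V) (x : forall i, T i) i (z : T i) :
  \sum_j h j (dfwith x i z j) = \sum_j h j (x j) - h i (x i) + h i z.
Proof.
rewrite (bigD1 i) //= [in RHS](bigD1 i) //= dfwithin.
rewrite [h i (x i) + _]addrC addrK addrC; congr (_ + _).
by apply: eq_bigr => j ij; rewrite dfwithout // eq_sym.
Qed.

Section RealFacts.
Variable R : realType.

Lemma ge0_of_pos_shift (a c : R) :
  0 <= c -> (forall t, 0 < t -> 0 <= a + c * t) -> 0 <= a.
Proof.
move=> c0 h; apply/ler_addgt0Pr => e e0.
have c1 : 0 < c + 1 by rewrite ltr_wpDl.
have := h (e / (c + 1)) (divr_gt0 e0 c1).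
have : c * (e / (c + 1)) <= e.
  by rewrite mulrCA ger_pMr // ler_pdivrMr // mul1r lerDl.
lra.
Qed.

Lemma interior_shift k (S : set 'cV[R]_k) (x d : 'cV[R]_k) :
  S° x -> exists2 e : R, 0 < e & S (x - e *: d).
Proof.
rewrite /interior /= => /nbhs_ballP [e e0 he].
have d1 : 0 < `|d| + 1 by rewrite ltr_wpDl.
exists (e / (2 * (`|d| + 1))); first by rewrite divr_gt0 // mulr_gt0.
apply: he; rewrite mx_norm_ball /ball_ /= opprB addrC subrK normrZ.
rewrite gtr0_norm; last by rewrite divr_gt0 // mulr_gt0.
rewrite mulrAC ltr_pdivrMr ?mulr_gt0 // ltr_pM2l //.
have := normr_ge0 d; lra.
Qed.

End RealFacts.

Section Cones.
Variables (R : realType) (p q : nat).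
Implicit Types k y : 'cV[R]_(p + q).

Lemma Kcone_Kpolar_le0 k y : Kcone k -> Kpolar y -> vdot y k <= 0.
Proof.
move=> [k0 k_le0] y_ge0; rewrite vdot_split k0 vdot0r add0r vdotE.
by apply: sumr_le0 => j _; rewrite mulrC mulr_le0_ge0.
Qed.

Lemma Kpolar0 : Kpolar (0 : 'cV[R]_(p + q)).
Proof. by move=> j; rewrite linear0 mxE. Qed.

Lemma KpolarD y y' : Kpolar y -> Kpolar y' -> Kpolar (y + y').
Proof. by move=> hy hy' j; rewrite linearD mxE addr_ge0. Qed.

Lemma KpolarZ a y : 0 <= a -> Kpolar y -> Kpolar (a *: y).
Proof. by move=> a0 hy j; rewrite linearZ mxE mulr_ge0. Qed.

Lemma Kpolar_argmax k y : Kpolar y ->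
  (forall y', Kpolar y' -> vdot y' k <= vdot y k) -> Kcone k /\ vdot y k = 0.
Proof.
move=> Ky y_max; have Kk : Kcone k.
  split.
    apply/matrixP => i j; rewrite ord1 [RHS]mxE.
    pose e : 'cV[R]_(p + q) := col_mx (delta_mx i 0) 0.
    have Ke s : Kpolar (y + s *: e).
      by move=> j'; rewrite linearD linearZ /= col_mxKd scaler0 addr0; apply: Ky.
    have ek : vdot e k = usubmx k i 0 by rewrite vdot_col_mx vdot0l addr0 vdotC vdot_delta.
    have := y_max _ (Ke 1); have := y_max _ (Ke (-1)); rewrite !vdotDl !vdotZl ek; lra.
  move=> j; pose e : 'cV[R]_(p + q) := col_mx 0 (delta_mx j 0).
  have Ke : Kpolar e by move=> j'; rewrite col_mxKd mxE ler0n.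
  have := y_max _ (KpolarD Ky Ke).
  by rewrite vdotDl vdot_col_mx vdot0l add0r [vdot (delta_mx _ _) _]vdotC vdot_delta; lra.
split=> //; apply/eqP; rewrite eq_le Kcone_Kpolar_le0 //=.
by have := y_max _ Kpolar0; rewrite vdot0l.
Qed.

End Cones.

Section Consensus.
Variables (R : realType) (r k : nat) (U : 'M[R]_(r, k)).

Lemma bUt_surjective N (W : 'I_k -> 'cV[R]_N) :
  (forall v : 'cV[R]_k, U *m v = 0 -> exists c, v = const_mx c) ->
  \sum_j W j = 0 -> exists Z : 'I_r -> 'cV[R]_N, forall j, bUt U Z j = W j.
Proof.
move=> kerU W0; pose Wt : 'M[R]_(N, k) := \matrix_(l, j) W j l 0.
have /submxP [D WtD] : (Wt <= U)%MS.
  rewrite submxE; apply/eqP/matrixP => l j'.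
  have [c cE] : exists c, col j' (cokermx U) = const_mx c.
    by apply: kerU; rewrite colE mulmxA mulmx_coker mul0mx.
  rewrite !mxE (eq_bigr (fun j => W j l 0 * c)) -?mulr_suml.
    by have := congr1 (fun M : 'cV[R]_N => M l 0) W0; rewrite /= summxE mxE => ->; rewrite mul0r.
  move=> j _; have := congr1 (fun M : 'cV[R]_k => M j 0) cE.
  by rewrite /= !mxE => <-.
exists (fun i => \col_l D l i) => j; apply/matrixP => l c; rewrite ord1 /bUt summxE.
have := congr1 (fun M : 'M[R]_(N, k) => M l j) WtD; rewrite /= !mxE => ->.
by apply: eq_bigr => i _; rewrite !mxE mulrC.
Qed.

Hypothesis U1 : U *m (const_mx 1 : 'cV[R]_k) = 0.

Lemma rowsum_eq0 i : \sum_j U i j = 0.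
Proof.
have := congr1 (fun M : 'cV[R]_r => M i 0) U1; rewrite /= !mxE => Ui1.
by rewrite -[RHS]Ui1; apply: eq_bigr => j _; rewrite mxE mulr1.
Qed.

Lemma sum_bUt N (Z : 'I_r -> 'cV[R]_N) : \sum_j bUt U Z j = 0.
Proof.
rewrite /bUt exchange_big big1 //= => i _.
by rewrite -scaler_suml rowsum_eq0 scale0r.
Qed.

Lemma bU_const N (y : 'cV[R]_N) i : bU U (fun _ => y) i = 0.
Proof. by rewrite /bU -scaler_suml rowsum_eq0 scale0r. Qed.

End Consensus.

Section Duality.
Local Unset Implicit Arguments.
Variables (R : realType) (m : nat) (n : 'I_m -> nat) (p q : nat).
Variables (f : forall i : 'I_m, 'cV[R]_(n i) -> R)
          (A : forall i : 'I_m, 'M[R]_(p, n i))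
          (b : 'I_m -> 'cV[R]_p)
          (g : forall i : 'I_m, 'cV[R]_(n i) -> 'cV[R]_q)
          (Om : forall i : 'I_m, set 'cV[R]_(n i)).
Local Set Implicit Arguments.

Local Notation vars := (forall i : 'I_m, 'cV[R]_(n i)).
Local Notation G i := (Gfun (A i) (b i) (g i)).
Local Notation F := (primal_obj f).
Local Notation L := (Lag f A b g Om).
Local Notation ell_ i := (ell (f i) (A i) (b i) (g i) (Om i)).
Local Notation dual := (dual_fun f A b g Om).
Implicit Types (x : vars) (y : 'cV[R]_(p + q)).

Definition in_Om x := forall i : 'I_m, Om i (x i).

Definition Gsum x := \sum_i G i (x i).

Lemma usubmx_Gsum x : usubmx (Gsum x) = \sum_i (A i *m x i - b i).
Proof. by rewrite raddf_sum; apply: eq_bigr => i _; exact: col_mxKu. Qed.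

Lemma dsubmx_Gsum x : dsubmx (Gsum x) = \sum_i g i (x i).
Proof. by rewrite raddf_sum; apply: eq_bigr => i _; exact: col_mxKd. Qed.

Lemma ellE i (z : 'cV[R]_(n i)) y :
  Kpolar y -> Om i z -> ell_ i z y = (f i z + vdot y (G i z))%:E.
Proof.
by move=> Ky Oz; rewrite /ell /Defs.indic (mem_set Ky) (mem_set Oz) adde0 oppe0 adde0.
Qed.

Lemma ell_out i (z : 'cV[R]_(n i)) y : Kpolar y -> ~ Om i z -> ell_ i z y = +oo%E.
Proof. by move=> Ky Oz; rewrite /ell /Defs.indic (mem_set Ky) (memNset Oz) oppe0 adde0. Qed.

Lemma ell_Ny i (z : 'cV[R]_(n i)) y : ~ Kpolar y -> ell_ i z y = -oo%E.
Proof. by move=> Ky; rewrite /ell /Defs.indic (memNset Ky) addeNy. Qed.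

Lemma LagE x Y : in_Om x -> (forall j, Kpolar (Y j)) ->
  L x Y = (F x + \sum_j vdot (Y j) (G j (x j)))%:E.
Proof.
move=> Ox KY; rewrite /Lag (eq_bigr _ (fun j _ => ellE (KY j) (Ox j))).
by rewrite sumEFin big_split.
Qed.

Lemma Lag_constE x y : in_Om x -> Kpolar y ->
  L x (fun _ => y) = (F x + vdot y (Gsum x))%:E.
Proof. by move=> Ox Ky; rewrite LagE // vdot_sumr. Qed.

Lemma Lag_Ny x Y : (exists j, ~ Kpolar (Y j)) -> L x Y = -oo%E.
Proof. by move=> [j KYj]; apply/esum_eqNyP; exists j; rewrite ell_Ny. Qed.

Lemma Lag_y x Y : (forall j, Kpolar (Y j)) -> ~ in_Om x -> L x Y = +oo%E.
Proof.
move=> KY /existsNP [j Oxj]; apply/esum_eqyP; last by exists j; rewrite ell_out.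
move=> i _; have [Oxi|Oxi] := pselect (Om i (x i)); first by rewrite ellE.
by rewrite ell_out.
Qed.

Lemma dual_le_Lag x y : (dual y <= L x (fun _ => y))%E.
Proof. by apply: lee_sum => i _; apply: ereal_inf_lbound; exists (x i). Qed.

Definition lag_minimizer y x := in_Om x /\
  forall x', in_Om x' -> F x + vdot y (Gsum x) <= F x' + vdot y (Gsum x').

(* The dual function is separable: a minimizer of the Lagrangian minimizes
   each [ell_i], as its blocks can be changed one at a time. *)
Lemma dual_lag_minimizer y x : Kpolar y -> lag_minimizer y x ->
  dual y = (F x + vdot y (Gsum x))%:E.
Proof.
move=> Ky [Ox xmin]; apply/eqP; rewrite eq_le -Lag_constE // dual_le_Lag /=.
apply: lee_sum => i _; apply/ereal_infP => _ [z _ <-].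
have [Oz|Oz] := pselect (Om i z); last by rewrite (ell_out Ky Oz) leey.
rewrite (ellE Ky Oz) (ellE Ky (Ox i)) lee_fin.
have Oxz : in_Om (dfwith x i z).
  by move=> j; case: dfwithP => [|j' _]; [exact: Oz | exact: Ox].
have := xmin _ Oxz; rewrite /Gsum !vdot_sumr /primal_obj.
by rewrite (big_dfwith (fun j => f j)) (big_dfwith (fun j z => vdot y (G j z))); lra.
Qed.

Definition KKT x y :=
  [/\ lag_minimizer y x, Kcone (Gsum x), Kpolar y & vdot y (Gsum x) = 0].

Lemma multiplier_KKT x y : primal_feasible A b g Om x -> Kpolar y ->
  (forall x', in_Om x' -> F x <= F x' + vdot y (Gsum x')) -> KKT x y.
Proof.
move=> [Kx Ox] Ky y_mult.
have cs : vdot y (Gsum x) = 0.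
  by apply/eqP; rewrite eq_le Kcone_Kpolar_le0 //=; have := y_mult x Ox; lra.
by split=> //; split=> // x' Ox'; rewrite cs addr0; exact: y_mult.
Qed.

Lemma KKT_dual_value x y : KKT x y -> dual y = (F x)%:E.
Proof. by case=> xmin _ Ky cs; rewrite (dual_lag_minimizer Ky xmin) cs addr0. Qed.

Lemma KKT_primal_opt x y : KKT x y -> primal_opt f A b g Om x.
Proof.
case=> [[Ox xmin] Kx Ky cs]; split=> [//|x' [Kx' Ox']].
by have := xmin x' Ox'; have := Kcone_Kpolar_le0 Kx' Ky; rewrite cs; lra.
Qed.

Lemma KKT_dual_opt x y : (0 < m)%N -> KKT x y -> dual_opt f A b g Om y.
Proof.
move=> m0 xy_KKT y'; rewrite (KKT_dual_value xy_KKT).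
have [[Ox _] Kx _ _] := xy_KKT; apply: le_trans (dual_le_Lag x y') _.
have [Ky'|Ky'] := pselect (Kpolar y'); last by rewrite Lag_Ny ?leNye //; exists (Ordinal m0).
by rewrite Lag_constE // lee_fin; have := Kcone_Kpolar_le0 Kx Ky'; lra.
Qed.

Definition slater := exists xbar : vars,
  (forall i, (Om i)° (xbar i)) /\ \sum_i (A i *m xbar i - b i) = 0 /\
  (forall j : 'I_q, (\sum_i g i (xbar i)) j 0 < 0).

Lemma slater_multiplier_ineq0 y : slater -> Kpolar y ->
  (forall x, in_Om x -> 0 <= vdot y (Gsum x)) -> dsubmx y = 0.
Proof.
move=> [xbar [Oxbar [Axbar gxbar]]] Ky y_ge0.
have := y_ge0 xbar (fun i => interior_subset (Oxbar i)).
rewrite vdot_split usubmx_Gsum Axbar vdot0r add0r dsubmx_Gsum vdotE => sum_ge0.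
apply/matrixP => j j0; rewrite ord1 [RHS]mxE; apply/eqP.
rewrite eq_le (Ky j) andbT leNgt; apply/negP => yj_gt0; move: sum_ge0.
rewrite (bigD1 j) //=.
have : dsubmx y j 0 * (\sum_i g i (xbar i)) j 0 < 0 by rewrite pmulr_rlt0.
have : \sum_(k < q | k != j) dsubmx y k 0 * (\sum_i g i (xbar i)) k 0 <= 0.
  by apply: sumr_le0 => k _; rewrite mulr_ge0_le0 // ltW.
lra.
Qed.

(* An equality multiplier nonnegative on [G(Om)] vanishes there: moving the
   interior point [xbar] against a direction where it is positive makes it
   negative. *)
Lemma slater_multiplier_eq0 y : slater -> dsubmx y = 0 ->
  (forall x, in_Om x -> 0 <= vdot y (Gsum x)) -> forall x, in_Om x -> vdot y (Gsum x) <= 0.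
Proof.
move=> [xbar [Oxbar [Axbar _]]] yq0 y_ge0.
pose h j (z : 'cV[R]_(n j)) := vdot (usubmx y) (A j *m (z - xbar j)).
have yGE x : vdot y (Gsum x) = \sum_j h j (x j).
  rewrite vdot_split yq0 vdot0l addr0 usubmx_Gsum -vdot_sumr; congr vdot.
  rewrite -[LHS]subr0 -[X in _ - X]Axbar -sumrB; apply: eq_bigr => i _.
  by rewrite mulmxBr opprB addrA subrK.
move=> x Ox; rewrite yGE; apply: contrapT => /negP; rewrite -ltNge => sum_gt0.
have [i hi] : exists i, 0 < h i (x i).
  apply: contrapT => /forallNP h_le0; move: sum_gt0; rewrite ltNge => /negP; apply.
  by apply: sumr_le0 => i _; rewrite leNgt; apply/negP; exact: h_le0.
have [e e0 Oe] := interior_shift (x i - xbar i) (Oxbar i).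
have Ox' : in_Om (dfwith xbar i (xbar i - e *: (x i - xbar i))).
  by move=> j; case: dfwithP => [|j' _]; [exact: Oe | exact: interior_subset].
have := y_ge0 _ Ox'; rewrite yGE (big_dfwith h) big1 => [|j _]; last first.
  by rewrite /h subrr mulmx0 vdot0r.
rewrite /h subrr mulmx0 vdot0r subr0 add0r addrAC subrr add0r mulmxN vdotNr.
by rewrite -scalemxAr vdotZr oppr_ge0 pmulr_rle0 // leNgt hi.
Qed.

Section StrongDuality.
Hypothesis f_convex : forall i, cvx_fun (f i).
Hypothesis g_convex : forall i (j : 'I_q), cvx_fun (fun z => g i z j 0).
Hypothesis Om_convex : forall i, cvx_set (Om i).

Local Notation comb th x1 x2 := (fun i => th *: x1 i + (1 - th) *: x2 i).

Section Combination.
Variables (th : R) (x1 x2 : vars).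
Hypothesis th01 : 0 <= th <= 1.

Lemma in_Om_comb : in_Om x1 -> in_Om x2 -> in_Om (comb th x1 x2).
Proof. by move=> O1 O2 i; exact: Om_convex. Qed.

Lemma primal_obj_comb : F (comb th x1 x2) <= th * F x1 + (1 - th) * F x2.
Proof. by rewrite !mulr_sumr -big_split; apply: ler_sum => i _; exact: f_convex. Qed.

Lemma usubmx_Gsum_comb :
  usubmx (Gsum (comb th x1 x2)) = th *: usubmx (Gsum x1) + (1 - th) *: usubmx (Gsum x2).
Proof.
rewrite !usubmx_Gsum !scaler_sumr -big_split; apply: eq_bigr => i _.
rewrite mulmxDr -!scalemxAr; move: (A i *m x1 i) (A i *m x2 i) => u v.
by apply/matrixP => k l; rewrite !mxE; ring.
Qed.

Lemma dsubmx_Gsum_comb j : dsubmx (Gsum (comb th x1 x2)) j 0 <=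
  th * dsubmx (Gsum x1) j 0 + (1 - th) * dsubmx (Gsum x2) j 0.
Proof.
rewrite !dsubmx_Gsum !summxE !mulr_sumr -big_split; apply: ler_sum => i _.
exact: g_convex.
Qed.

End Combination.

(* The set of achievable (objective excess, constraint value) pairs, enlarged
   by a positive slack on the objective and a nonnegative slack on the
   inequality constraints; it avoids 0 when [v0] is the optimal value. *)
Definition value_set (v0 : R) : set 'cV[R]_(1 + (p + q)) :=
  [set v | exists x t (s : 'cV[R]_q), [/\ in_Om x, 0 < t, (forall j, 0 <= s j 0) &
     v = col_mx (F x - v0 + t)%:M (Gsum x + col_mx 0 s)]].

Lemma value_set_convex v0 : cvx_set (value_set v0).
Proof.
move=> _ _ th [x1 [t1 [s1 [Ox1 t1_gt0 s1_ge0 ->]]]] [x2 [t2 [s2 [Ox2 t2_gt0 s2_ge0 ->]]]] th01.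
have [th0 th1] : 0 <= th /\ 0 <= 1 - th by case/andP: th01 => ? ?; split; lra.
pose x := comb th x1 x2.
exists x, (th * (F x1 - v0 + t1) + (1 - th) * (F x2 - v0 + t2) - (F x - v0)).
exists (th *: (dsubmx (Gsum x1) + s1) + (1 - th) *: (dsubmx (Gsum x2) + s2) - dsubmx (Gsum x)).
split.
- exact: in_Om_comb.
- by have := primal_obj_comb x1 x2 th01; nra.
- move=> j; have := dsubmx_Gsum_comb x1 x2 th01 j.
  by have := mulr_ge0 th0 (s1_ge0 j); have := mulr_ge0 th1 (s2_ge0 j); rewrite !mxE; lra.
rewrite !scale_col_mx add_col_mx; congr col_mx.
  by apply/matrixP => i j; rewrite !ord1 !mxE eqxx !mulr1n; ring.
rewrite -[Gsum x]vsubmxK -[Gsum x1]vsubmxK -[Gsum x2]vsubmxK !add_col_mx !scale_col_mx.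
by rewrite add_col_mx !col_mxKd subrKC !addr0 /x usubmx_Gsum_comb.
Qed.

Lemma value_set_notin0 xs : primal_opt f A b g Om xs -> ~ value_set (F xs) 0.
Proof.
move=> [_ xs_min] [x [t [s [Ox t_gt0 s_ge0 e]]]].
rewrite -col_mx0 in e; have [/(congr1 (fun M : 'M[R]_1 => M 0 0)) e1 e2] := eq_col_mx e.
move: e1; rewrite !mxE eqxx mulr1n => e1.
have GxE : Gsum x = - col_mx 0 s by apply/eqP; rewrite -addr_eq0 e2.
have Kx : Kcone (Gsum x).
  split; first by rewrite GxE raddfN /= col_mxKu oppr0.
  by move=> j; rewrite GxE raddfN /= col_mxKd mxE oppr_le0.
by have := xs_min x (conj Kx Ox); lra.
Qed.

Lemma value_set_separator v0 mu y x0 : in_Om x0 ->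
  (forall v, value_set v0 v -> 0 <= vdot (col_mx mu%:M y) v) ->
  [/\ Kpolar y, 0 <= mu & forall x, in_Om x -> 0 <= mu * (F x - v0) + vdot y (Gsum x)].
Proof.
move=> Ox0 l_ge0.
have H x t (s : 'cV[R]_q) : in_Om x -> 0 < t -> (forall j, 0 <= s j 0) ->
    0 <= mu * (F x - v0) + mu * t + vdot y (Gsum x) + vdot (dsubmx y) s.
  move=> Ox t0 s0; have := l_ge0 (col_mx (F x - v0 + t)%:M (Gsum x + col_mx 0 s)).
  rewrite vdot_head /vhead col_mxKu col_mxKd mxE eqxx mulr1n vdotDr mulrDr.
  rewrite [vdot y (col_mx _ _)]vdot_split col_mxKu col_mxKd vdot0r add0r !addrA.
  by apply; exists x, t, s.
have s0 j : 0 <= (0 : 'cV[R]_q) j 0 by rewrite mxE.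
pose c := mu * (F x0 - v0) + vdot y (Gsum x0).
have Ky : Kpolar y.
  move=> j; rewrite leNgt; apply/negP => yj_lt0.
  pose M := (`|c + mu| + 1) / - dsubmx y j 0.
  have M_gt0 : 0 < M by rewrite divr_gt0 ?oppr_gt0 // ltr_wpDl.
  have sM j' : 0 <= (M *: delta_mx j 0 : 'cV[R]_q) j' 0.
    by rewrite !mxE mulr_ge0 ?ler0n // ltW.
  have := H x0 1 _ Ox0 ltr01 sM; rewrite vdotZr vdot_delta.
  have -> : M * dsubmx y j 0 = - (`|c + mu| + 1) by rewrite /M; field; rewrite lt_eqF.
  by have := ler_norm (c + mu); rewrite /c; lra.
have mu_ge0 : 0 <= mu.
  rewrite leNgt; apply/negP => mu_lt0.
  pose T := (`|c| + 1) / - mu.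
  have T_gt0 : 0 < T by rewrite divr_gt0 ?oppr_gt0 // ltr_wpDl.
  have := H x0 T 0 Ox0 T_gt0 s0; rewrite vdot0r addr0.
  have -> : mu * T = - (`|c| + 1) by rewrite /T; field; rewrite lt_eqF.
  by have := ler_norm c; rewrite /c; lra.
split=> // x Ox; apply: (ge0_of_pos_shift mu_ge0) => t t0.
by have := H x t 0 Ox t0 s0; rewrite vdot0r addr0; lra.
Qed.

Lemma slater_multiplier xs : slater -> primal_opt f A b g Om xs ->
  exists2 y, Kpolar y & forall x, in_Om x -> F xs <= F x + vdot y (Gsum x).
Proof.
move=> sl xs_opt; have [[_ Oxs] _] := xs_opt.
have value_set0 : value_set (F xs) !=set0.
  exists (col_mx (F xs - F xs + 1)%:M (Gsum xs + col_mx 0 0)), xs, 1, 0.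
  by split=> // j; rewrite mxE.
have [l [l_ge0 [_ [x1 [t1 [s1 [Ox1 _ _ ->]]]] lv]]] :=
  convex_sep (@value_set_convex (F xs)) (value_set_notin0 xs_opt) value_set0.
rewrite -(vheadK l) in l_ge0 lv.
have [Ky mu_ge0 y_mult] := value_set_separator Oxs l_ge0.
have [mu0|mu_neq0] := eqVneq (vhead l) 0.
  (* a separator with no objective component contradicts Slater's condition *)
  have y_ge0 x : in_Om x -> 0 <= vdot (dsubmx l) (Gsum x).
    by move=> Ox; have := y_mult x Ox; rewrite mu0 mul0r add0r.
  have yq0 := slater_multiplier_ineq0 sl Ky y_ge0.
  have := slater_multiplier_eq0 sl yq0 y_ge0 Ox1; move: lv.
  rewrite vdot_head mu0 mul0r add0r col_mxKd vdotDr [vdot _ (col_mx _ _)]vdot_split.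
  by rewrite col_mxKu col_mxKd yq0 vdot0r vdot0l add0r addr0; lra.
have mu_inv_ge0 : 0 <= (vhead l)^-1 by rewrite invr_ge0.
exists ((vhead l)^-1 *: dsubmx l); first exact: KpolarZ.
move=> x Ox; have := mulr_ge0 mu_inv_ge0 (y_mult x Ox).
by rewrite vdotZl mulrDr mulrA mulVf ?mul1r //; lra.
Qed.

Lemma optimal_KKT x y : (0 < m)%N -> slater ->
  primal_opt f A b g Om x -> dual_opt f A b g Om y -> KKT x y.
Proof.
move=> m0 sl x_opt y_opt; have [x_feas _] := x_opt; have [_ Ox] := x_feas.
have [y0 Ky0 y0_mult] := slater_multiplier sl x_opt.
have Fx_le_dual : ((F x)%:E <= dual y)%E.
  by rewrite -(KKT_dual_value (multiplier_KKT x_feas Ky0 y0_mult)); exact: y_opt.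
have Ky : Kpolar y.
  apply: contrapT => Ky; move: Fx_le_dual; have := dual_le_Lag x y.
  by rewrite Lag_Ny; [rewrite leeNy_eq => /eqP -> | exists (Ordinal m0)].
apply: multiplier_KKT => // x' Ox'.
by have := le_trans Fx_le_dual (dual_le_Lag x' y); rewrite Lag_constE // lee_fin.
Qed.

End StrongDuality.

Lemma partial_x0P x Y : partial_x f A b g Om x Y (fun _ => 0) <->
  L x Y \is a fin_num /\ forall x', (L x Y <= L x' Y)%E.
Proof.
by split=> [] [fin xmin]; split=> // x'; have := xmin x'; rewrite famdot0l adde0.
Qed.

Lemma Phi0P r (U : 'M[R]_(r, m)) x Y Z :
  Phi f A b g Om U x Y Z ((fun _ => 0), (fun _ => 0), (fun _ => 0)) <->
  [/\ partial_x f A b g Om x Y (fun _ => 0),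
      subdiff (fun Y' => - L x Y')%E Y (fun j => - bUt U Z j) &
      forall k, bU U Y k = 0].
Proof.
split=> [[x0 [[_ [w' w'_sub <-] wZ] UY]]|[x0 Ysub UY]].
  split=> // [|k]; last first.
    by have /esym/eqP := congr1 (fun h => h k) UY; rewrite oppr_eq0 => /eqP.
  suff -> : (fun j => - bUt U Z j) = w' by [].
  apply/funext => j; have /esym/eqP := congr1 (fun h => h j) wZ.
  by rewrite opprK addr_eq0 => /eqP ->.
split=> //; split; last by apply/funext => k; rewrite /= UY oppr0.
exists (bUt U Z); last by apply/funext => j; rewrite addNr.
by exists (fun j => - bUt U Z j) => //; apply/funext => j; rewrite opprK.
Qed.

Lemma KKT_partial_x0 x y : KKT x y -> partial_x f A b g Om x (fun _ => y) (fun _ => 0).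
Proof.
move=> [[Ox xmin] Kx Ky cs]; apply/partial_x0P; rewrite Lag_constE // cs addr0.
split=> // x'; have [Ox'|Ox'] := pselect (in_Om x'); last by rewrite Lag_y ?leey.
by rewrite Lag_constE // lee_fin; have := xmin x' Ox'; rewrite cs addr0.
Qed.

(* The consensus variable [Z] is found because the deviations of the local
   constraint values from their mean sum to zero, i.e. lie in the range of
   [U^T]. *)
Lemma KKT_Phi r (U : 'M[R]_(r, m)) x y : (0 < m)%N ->
  (forall v : 'cV[R]_m, U *m v = 0 -> exists c, v = const_mx c) ->
  U *m (const_mx 1 : 'cV[R]_m) = 0 -> KKT x y ->
  exists Z, Phi f A b g Om U x (fun _ => y) Z ((fun _ => 0), (fun _ => 0), (fun _ => 0)).
Proof.
move=> m0 kerU U1 xy_KKT; have [[Ox _] Kx Ky cs] := xy_KKT.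
have LE : L x (fun _ => y) = (F x)%:E by rewrite Lag_constE // cs addr0.
pose W j := G j (x j) - m%:R^-1 *: Gsum x.
have W0 : \sum_j W j = 0.
  rewrite sumrB sumr_const card_ord -scaler_nat scalerA mulfV ?scale1r ?subrr //.
  by rewrite pnatr_eq0 -lt0n.
have [Z ZW] := bUt_surjective kerU W0.
exists Z; apply/Phi0P; split=> [||k]; [exact: KKT_partial_x0 | | exact: bU_const].
split=> [|Y']; first by rewrite LE.
have [KY'|/existsNP KY'] := pselect (forall j, Kpolar (Y' j)); last first.
  by rewrite (Lag_Ny _ KY') /= leey.
rewrite LE LagE // -!EFinN -EFinD lee_fin /famdot.
have -> : \sum_j vdot (- bUt U Z j) (Y' j - y) = - \sum_j vdot (W j) (Y' j).
  rewrite (eq_bigr (fun j => - vdot (W j) (Y' j) + vdot (W j) y)).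
    by rewrite big_split /= -vdot_suml W0 vdot0l addr0 sumrN.
  by move=> j _; rewrite ZW vdotNl vdotBr opprB addrC.
suff : \sum_j vdot (Y' j) (G j (x j)) <= \sum_j vdot (W j) (Y' j) by lra.
rewrite -subr_ge0 -sumrB; apply: sumr_ge0 => j _.
rewrite vdotC -vdotBr /W addrAC subrr add0r vdotNr vdotZr oppr_ge0.
by rewrite mulr_ge0_le0 ?invr_ge0 ?ler0n // Kcone_Kpolar_le0.
Qed.

Lemma Phi_KKT r (U : 'M[R]_(r, m)) x y Z : (0 < m)%N -> U *m (const_mx 1 : 'cV[R]_m) = 0 ->
  Phi f A b g Om U x (fun _ => y) Z ((fun _ => 0), (fun _ => 0), (fun _ => 0)) ->
  KKT x y.
Proof.
move=> m0 U1 /Phi0P [/partial_x0P [fin xmin] [_ Ysub] _].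
have Ky : Kpolar y by apply: contrapT => Ky; move: fin; rewrite Lag_Ny //; exists (Ordinal m0).
have Ox : in_Om x by apply: contrapT => Ox; move: fin; rewrite Lag_y.
have [Kx cs] : Kcone (Gsum x) /\ vdot y (Gsum x) = 0.
  apply: Kpolar_argmax => // y' Ky'; have := Ysub (fun _ => y').
  rewrite famdot_const sumrN sum_bUt // oppr0 vdot0l adde0 !Lag_constE //.
  by rewrite -!EFinN lee_fin; lra.
apply: multiplier_KKT => // x' Ox'; have := xmin x'.
by rewrite !Lag_constE // lee_fin cs addr0.
Qed.

End Duality.

Theorem lemma1 (R : realType) (m : nat) (n : 'I_m -> nat) (p q r : nat)
  (f : forall i : 'I_m, 'cV[R]_(n i) -> R)
  (A : forall i : 'I_m, 'M[R]_(p, n i))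
  (b : 'I_m -> 'cV[R]_p)
  (g : forall i : 'I_m, 'cV[R]_(n i) -> 'cV[R]_q)
  (Om : forall i : 'I_m, set 'cV[R]_(n i))
  (E : rel 'I_m) (L : 'M[R]_m) (U : 'M[R]_(r, m)) :
  (2 <= m)%N -> (forall i, 0 < n i)%N ->
  (* (A1) *)
  symmetric E -> (forall i j, connect E i j) ->
  L^T = L ->
  (forall i j, i != j -> ~~ E i j -> L i j = 0) ->
  (forall v : 'cV[R]_m, L *m v = 0 <-> exists c : R, v = const_mx c) ->
  L = U^T *m U -> row_free U -> U *m (const_mx 1 : 'cV[R]_m) = 0 ->
  (* (A2) *)
  (forall i, cvx_fun (f i) /\ lower_semicontinuous (fun x => (f i x)%:E)) ->
  (forall i (j : 'I_q), cvx_fun (fun x => g i x j 0) /\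
                        lower_semicontinuous (fun x => (g i x j 0)%:E)) ->
  (forall i, Om i !=set0 /\ closed (Om i) /\ cvx_set (Om i)) ->
  (exists x, primal_opt f A b g Om x) ->
  (* (A3) *)
  (exists xbar : forall i : 'I_m, 'cV[R]_(n i),
      (forall i, (Om i)° (xbar i)) /\
      \sum_(i < m) (A i *m xbar i - b i) = 0 /\
      (forall j : 'I_q, (\sum_(i < m) g i (xbar i)) j 0 < 0)) ->
  forall (x : forall i : 'I_m, 'cV[R]_(n i)) (y : 'cV[R]_(p + q)),
    (primal_opt f A b g Om x /\ dual_opt f A b g Om y) <->
    exists Z : 'I_r -> 'cV[R]_(p + q),
      Phi f A b g Om U x (fun _ => y) Z
          ((fun i => 0), (fun _ => 0), (fun _ => 0)).
Proof.
move=> m2 _ _ _ _ _ kerL LUU _ U1 f_cvx g_cvx Om_cvx _ slater x y.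
have m0 : (0 < m)%N by exact: ltnW.
have kerU (v : 'cV[R]_m) : U *m v = 0 -> exists c : R, v = const_mx c.
  by move=> Uv; apply/kerL; rewrite LUU -mulmxA Uv mulmx0.
split=> [[x_opt y_opt]|[Z /(Phi_KKT m0 U1) xy_KKT]].
  apply: (KKT_Phi m0 kerU U1).
  apply: (optimal_KKT _ _ _ m0 slater x_opt y_opt).
  - by move=> i; case: (f_cvx i).
  - by move=> i j; case: (g_cvx i j).
  - by move=> i; case: (Om_cvx i) => _ [].
by split; [exact: KKT_primal_opt xy_KKT | exact: KKT_dual_opt m0 xy_KKT].
Qed.
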